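(* Let $k\ge2$, let $n$ be divisible by $k$, and consider the $n$-vertex bipartite construction with ratio $\rho$ and with parts $X,Y$ ($|X|=\rho n$), where all edges touching $X$ are red and all edges inside $Y$ are blue. Then: (1) writing $|Y|=qk+r$ with $0\le r<k$, the largest number of blue edges in a $K_k$-factor is $q\binom{k}{2}+\binom{r}{2}=\frac{k-1}{2}(1-\rho)n+O(1)$; (2) the largest number of red edges in a $K_k$-factor is $\left(\frac{k-1}{2}-\frac{k-\lfloor k\rho\rfloor-1}{2}\left(\frac{\lfloor k\rho\rfloor}{k}+1-2\rho\right)\right)n$.
   Context: A $K_k$-factor of $K_n$ ($k\mid n$) is a collection of $n/k$ vertex-disjoint copies of $K_k$ covering all vertices; its edges are the edges of these cliques. The bipartite construction with ratio $\rho$ is the red/blue-coloring of $K_n$ with vertex partition $X\cup Y$, $|X|=\rho n$, in which all edges touching $X$ get one color and all edges inside $Y$ get the other color. *)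

From HB Require Import structures.
From mathcomp Require Import all_boot all_order all_algebra.
Set Implicit Arguments. Unset Strict Implicit. Unset Printing Implicit Defensive.
Import Order.TTheory GRing.Theory Num.Theory.

(* Vertices of K_n are 'I_n; an edge of K_n is a 2-element vertex set. *)

(* A K_k-factor of K_n: a partition of the vertex set into blocks
   (vertex sets of the cliques), each of size k. *)
Definition Kfactor (n k : nat) (P : {set {set 'I_n}}) : bool :=
  partition P [set: 'I_n] && [forall B in P, #|B| == k].

Definition factor_edges (n : nat) (P : {set {set 'I_n}}) : {set {set 'I_n}} :=
  [set e : {set 'I_n} | (#|e| == 2) && [exists B in P, e \subset B]].

Definition red_edge (n : nat) (X : {set 'I_n}) (e : {set 'I_n}) : bool :=
  e :&: X != set0.
Definition blue_edge (n : nat) (X : {set 'I_n}) (e : {set 'I_n}) : bool :=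
  e \subset ~: X.

Definition nb_red (n : nat) (X : {set 'I_n}) (P : {set {set 'I_n}}) : nat :=
  #|[set e in factor_edges P | red_edge X e]|.
Definition nb_blue (n : nat) (X : {set 'I_n}) (P : {set {set 'I_n}}) : nat :=
  #|[set e in factor_edges P | blue_edge X e]|.

Definition max_over_factors (n k : nat) (f : {set {set 'I_n}} -> nat) (v : nat) : Prop :=
  (exists2 P, @Kfactor n k P & f P = v) /\ (forall P, @Kfactor n k P -> f P <= v)%N.

From HB Require Import structures.
From mathcomp Require Import all_boot all_order all_algebra.
From mathcomp Require Import zify ring lra.
Import Order.TTheory GRing.Theory Num.Theory.

Set Implicit Arguments.
Unset Strict Implicit.
Unset Printing Implicit Defensive.

(* Let m = n / k and y = |Y|.  A block B of a K_k-factor carries C(|B :&: Y|, 2)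
   blue edges out of C(k, 2), so only the m numbers |B :&: Y| in [0, k], which
   sum to y, matter.  The blue count is largest when Y fills as few blocks as
   possible: by an exchange argument, adding a block of size a <= k to a greedy
   packing never beats re-packing greedily.  The red count is largest when the
   blue count is smallest, i.e. when Y is spread evenly: on integers, 2 C(x, 2)
   lies above its secant through a = y / m and a + 1, with equality exactly at
   a and a + 1.  Listing the vertices with Y first, both extremes are realised
   by grouping consecutive positions, resp. positions congruent modulo m. *)

Lemma bin2_mul2 x : 'C(x, 2) * 2 + x = x * x.
Proof. by elim: x => // x IH; rewrite binS bin1; lia. Qed.

Lemma bin2D x y : 'C(x + y, 2) = 'C(x, 2) + 'C(y, 2) + x * y.
Proof.
elim: y => [|y IH]; first by rewrite muln0 bin0n !addn0.
by rewrite addnS !binS !bin1 IH; lia.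
Qed.

(* The secant of x |-> 2 C(x, 2) through a and a + 1 is x |-> 2 a x - a (a + 1). *)
Lemma bin2_secant a x : a * x * 2 <= 'C(x, 2) * 2 + a * a.+1.
Proof.
have [a_le_x | x_lt_a] := leqP a x.
  rewrite -(subnKC a_le_x) bin2D; have := bin2_mul2 a; nia.
rewrite -(subnKC (ltnW x_lt_a)); have := bin2_mul2 x; nia.
Qed.

Lemma bin2_secant_eq a x : (x == a) || (x == a.+1) -> a * x * 2 = 'C(x, 2) * 2 + a * a.+1.
Proof. by case/orP=> /eqP->; rewrite ?binS ?bin1; have := bin2_mul2 a; nia. Qed.

Lemma count_iotaS (p : pred nat) N : count p (iota 0 N.+1) = count p (iota 0 N) + p N.
Proof. by rewrite -addn1 iotaD count_cat /= addn0. Qed.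

Lemma count_divn_eq k j N : 0 < k ->
  count (fun i => i %/ k == j) (iota 0 N) = minn k (N - j * k).
Proof.
move=> k_gt0; elim: N => [|N IH]; first by rewrite sub0n minn0.
rewrite count_iotaS IH eqn_leq leq_divRL // -ltnS ltn_divLR // mulSn.
case: (leqP (j * k) N) => jk_le; case: (ltnP N (k + j * k)) => /=; lia.
Qed.

Lemma count_modn_eq m j N : j < m ->
  count (fun i => i %% m == j) (iota 0 N) = N %/ m + (j < N %% m).
Proof.
move=> j_lt_m; have m_gt0 : 0 < m by lia.
elim: N => [|N IH]; first by rewrite div0n mod0n.
rewrite count_iotaS IH divnS // modnS.
have := divn_eq N m; have := divn_eq N.+1 m; have := ltn_pmod N m_gt0.
rewrite divnS // modnS; case: (m %| N.+1) => /=;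
  set q := N %/ m; set r := N %% m; clearbody q r; nia.
Qed.

Lemma divmod_sum_mul m k x y : 0 < m -> x + y = m * k ->
  x %% m = 0 /\ y %% m = 0 /\ x %/ m + y %/ m = k \/
  x %% m + y %% m = m /\ (x %/ m + y %/ m).+1 = k.
Proof.
move=> m_gt0 xy_eq; have := divnD x y m_gt0; have := modnD x y m_gt0.
rewrite xy_eq modnMr (mulKn k m_gt0).
have := ltn_pmod x m_gt0; have := ltn_pmod y m_gt0.
set a := x %/ m; set s := x %% m; set b := y %/ m; set t := y %% m; clearbody a s b t.
case: (leqP m (s + t)) => /=; lia.
Qed.

Definition packed_pairs k y := y %/ k * 'C(k, 2) + 'C(y %% k, 2).

(* Pairs within m groups of sizes y %/ m or y %/ m + 1 adding up to y: there are
   y %% m groups of the larger size, and C(a + 1, 2) = C(a, 2) + a. *)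
Definition balanced_pairs m y := m * 'C(y %/ m, 2) + y %% m * (y %/ m).

Lemma packed_pairs_divmod k q r : r < k -> packed_pairs k (q * k + r) = q * 'C(k, 2) + 'C(r, 2).
Proof.
move=> r_lt_k; have k_gt0 : 0 < k by lia.
by rewrite /packed_pairs divnMDl // modnMDl divn_small // modn_small // addn0.
Qed.

Lemma packed_pairsD k y a : 0 < k -> a <= k ->
  packed_pairs k y + 'C(a, 2) <= packed_pairs k (y + a).
Proof.
move=> k_gt0 a_le_k.
have r_lt_k : y %% k < k by rewrite ltn_pmod.
rewrite (divn_eq y k) packed_pairs_divmod //.
set q := y %/ k; set r := y %% k.
have [ra_lt_k | k_le_ra] := ltnP (r + a) k.
  by rewrite -[q * k + r + a]addnA packed_pairs_divmod // bin2D; lia.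
have -> : q * k + r + a = q.+1 * k + (r + a - k) by rewrite mulSn; lia.
rewrite packed_pairs_divmod; last by lia.
set b := r + a - k; set e := k - r.
have -> : k = r + e by lia.
have -> : a = b + e by lia.
rewrite mulSn !bin2D; have : b <= r by lia.
nia.
Qed.

Lemma packed_pairs_rec k y : 0 < k ->
  packed_pairs k y = 'C(minn k y, 2) + packed_pairs k (y - k).
Proof.
move=> k_gt0; have [k_le_y | y_lt_k] := leqP k y.
  rewrite -{1}(subnKC k_le_y) /packed_pairs.
  by rewrite divnDl ?dvdnn // modnDl divnn k_gt0; lia.
rewrite (eqP (ltnW y_lt_k)).
by rewrite /packed_pairs divn_small // modn_small // div0n mod0n !addn0.
Qed.

Lemma sum_bin2_chunks k m y : 0 < k -> y <= m * k ->
  \sum_(j < m) 'C(minn k (y - j * k), 2) = packed_pairs k y.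
Proof.
move=> k_gt0; elim: m y => [|m IH] y y_le.
  by move: y_le; rewrite mul0n leqn0 big_ord0 => /eqP->; rewrite /packed_pairs div0n mod0n.
rewrite big_ord_recl subn0 packed_pairs_rec // -IH; last by rewrite mulSn in y_le; lia.
by congr (_ + _); apply: eq_bigr => j _; rewrite mulSn subnDA.
Qed.

Lemma balanced_pairs_secant m y :
  balanced_pairs m y * 2 + m * (y %/ m * (y %/ m).+1) = y %/ m * y * 2.
Proof.
rewrite /balanced_pairs; have := bin2_mul2 (y %/ m); have := divn_eq y m.
set a := y %/ m; set s := y %% m => -> e.
have -> : a * (a * m + s) * 2 = a * a * m * 2 + a * s * 2 by ring.
have -> : m * (a * a.+1) = m * (a * a) + m * a by ring.
by rewrite -e; ring.
Qed.

Section SumsOfPairs.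
Variables (I : finType) (A : {pred I}) (g : I -> nat).

Lemma sum_bin2_le_packed k : 0 < k -> {in A, forall i, g i <= k} ->
  \sum_(i in A) 'C(g i, 2) <= packed_pairs k (\sum_(i in A) g i).
Proof.
move=> k_gt0 g_le; elim/big_rec2: _ => [|i s b Ai b_le].
  by rewrite /packed_pairs div0n mod0n.
rewrite addnC [g i + s]addnC; apply: leq_trans _ (packed_pairsD s k_gt0 (g_le i Ai)).
by rewrite leq_add2r.
Qed.

Lemma balanced_le_sum_bin2 :
  balanced_pairs #|A| (\sum_(i in A) g i) <= \sum_(i in A) 'C(g i, 2).
Proof.
set y := \sum_(i in A) g i; set a := y %/ #|A|.
rewrite -(leq_pmul2r (isT : 0 < 2)) -(leq_add2r (#|A| * (a * a.+1))) balanced_pairs_secant.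
rewrite -/a /y big_distrr !big_distrl -sum_nat_const -big_split /=.
by apply: leq_sum => i _; apply: bin2_secant.
Qed.

Lemma balanced_eq_sum_bin2 :
  let a := (\sum_(i in A) g i) %/ #|A| in
  {in A, forall i, (g i == a) || (g i == a.+1)} ->
  balanced_pairs #|A| (\sum_(i in A) g i) = \sum_(i in A) 'C(g i, 2).
Proof.
move=> a g_near; apply/eqP; rewrite -(eqn_pmul2r (isT : 0 < 2)) -(eqn_add2r (#|A| * (a * a.+1))).
rewrite balanced_pairs_secant -/a big_distrr !big_distrl -sum_nat_const -big_split /=.
by apply/eqP/eq_bigr => i Ai; apply: bin2_secant_eq; apply: g_near.
Qed.

End SumsOfPairs.

Lemma sum_partition_cardI (T : finType) (P : {set {set T}}) (D W : {set T}) :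
  partition P D -> W \subset D -> \sum_(B in P) #|B :&: W| = #|W|.
Proof.
move=> P_part /subsetP W_sub; rewrite -sum1_card.
rewrite (eq_bigl [pred x in D | x \in W]) => [|x]; last first.
  by rewrite !inE; case: (boolP (x \in W)) => [/W_sub-> | _]; rewrite ?andbF.
rewrite (set_partition_big_cond _ P_part); apply: eq_bigr => B _.
by rewrite sum1_card; apply: eq_card => x; rewrite !inE.
Qed.

Lemma card_factor_edges_sub n (P : {set {set 'I_n}}) (W : {set 'I_n}) :
  partition P [set: 'I_n] ->
  #|[set e in factor_edges P | e \subset W]| = \sum_(B in P) 'C(#|B :&: W|, 2).
Proof.
move=> P_part; set S := [set e in factor_edges P | e \subset W].
have block_uniq e B B' : e != set0 -> B \in P -> B' \in P ->
    e \subset B -> e \subset B' -> B = B'.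
  case/set0Pn=> v ev PB PB' /subsetP/(_ v ev) vB /subsetP/(_ v ev) vB'.
  have P_triv := partition_trivIset P_part.
  by rewrite -(def_pblock P_triv PB vB) (def_pblock P_triv PB' vB').
have draws_block B : B \in P ->
    #|[set e : {set 'I_n} | e \subset B :&: W & #|e| == 2]| = \sum_(e in S | e \subset B) 1.
  move=> PB; rewrite sum1_card; apply: eq_card => e; rewrite !inE subsetI unfold_in /= !inE.
  case: (boolP (e \subset B)) => eB; last by rewrite andbF.
  have -> : [exists B0 in P, e \subset B0] by apply/existsP; exists B; rewrite PB.
  by rewrite /= !andbT andbC.
rewrite (eq_bigr _ (fun B _ => esym (cards_draws (B :&: W) 2))) (eq_bigr _ draws_block).
(* Double counting: every edge of S lies in exactly one block. *)
rewrite (exchange_big_dep [in S]); last by move=> B e _ /andP[].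
rewrite -sum1_card; apply: eq_bigr => e eS.
have [/[!inE] /andP[e2 /existsP[B0 /andP[PB0 eB0]]] _] := setIdP eS.
rewrite (bigD1 B0); last by rewrite PB0 eB0 andbT; move: eS; rewrite !inE.
rewrite big1 // => B /andP[/andP[PB /andP[_ eB]] /eqP[]].
by apply: block_uniq eB eB0 => //; apply: contraTneq e2 => ->; rewrite cards0.
Qed.

Section Kfactor.
Variables (n k : nat) (P : {set {set 'I_n}}).
Hypothesis P_factor : Kfactor k P.

Lemma Kfactor_partition : partition P [set: 'I_n].
Proof. by case/andP: P_factor. Qed.

Lemma Kfactor_block_card : {in P, forall B : {set 'I_n}, #|B| = k}.
Proof. by case/andP: P_factor => _ /forall_inP B_card B /B_card/eqP. Qed.

Lemma card_Kfactor : 0 < k -> #|P| = n %/ k.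
Proof.
move=> k_gt0; have := card_uniform_partition Kfactor_block_card Kfactor_partition.
by rewrite cardsT card_ord => n_eq; rewrite [in RHS]n_eq mulnK.
Qed.

Variable X : {set 'I_n}.

Lemma nb_blue_Kfactor : nb_blue X P = \sum_(B in P) 'C(#|B :&: ~: X|, 2).
Proof. exact: card_factor_edges_sub Kfactor_partition. Qed.

Lemma nb_red_add_blue : nb_red X P + nb_blue X P = #|P| * 'C(k, 2).
Proof.
have -> : nb_red X P = #|factor_edges P :\: [set e | blue_edge X e]|.
  apply: eq_card => e; rewrite !inE /red_edge /blue_edge setI_eq0 disjoints_subset.
  by rewrite andbC.
rewrite /nb_blue setIdE addnC cardsID.
have -> : factor_edges P = [set e in factor_edges P | e \subset [set: 'I_n]].
  by apply/setP => e; rewrite !inE subsetT andbT.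
rewrite card_factor_edges_sub ?Kfactor_partition // -sum_nat_const.
by apply: eq_bigr => B PB; rewrite setIT Kfactor_block_card.
Qed.

Lemma Kfactor_sum_cardI : \sum_(B in P) #|B :&: ~: X| = #|~: X|.
Proof. exact: sum_partition_cardI Kfactor_partition (subsetT _). Qed.

Lemma nb_blue_le_packed : 0 < k -> nb_blue X P <= packed_pairs k #|~: X|.
Proof.
move=> k_gt0; rewrite nb_blue_Kfactor -Kfactor_sum_cardI.
apply: sum_bin2_le_packed => // B PB.
by rewrite -(Kfactor_block_card PB) subset_leq_card ?subsetIl.
Qed.

Lemma balanced_le_nb_blue : balanced_pairs #|P| #|~: X| <= nb_blue X P.
Proof. by rewrite nb_blue_Kfactor -Kfactor_sum_cardI balanced_le_sum_bin2. Qed.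

Lemma nb_blue_balanced (a := #|~: X| %/ #|P|) :
  {in P, forall B : {set 'I_n}, (#|B :&: ~: X| == a) || (#|B :&: ~: X| == a.+1)} ->
  nb_blue X P = balanced_pairs #|P| #|~: X|.
Proof.
move=> near_a; rewrite nb_blue_Kfactor -Kfactor_sum_cardI balanced_eq_sum_bin2 //.
by rewrite Kfactor_sum_cardI.
Qed.

End Kfactor.

Section FrontOrder.
Variables (n : nat) (Z : {set 'I_n}).

Definition front_seq : seq 'I_n := enum Z ++ enum (~: Z).

Lemma mem_front_seq v : v \in front_seq.
Proof. by rewrite mem_cat !mem_enum inE orbN. Qed.

Lemma size_front_seq : size front_seq = n.
Proof. by rewrite size_cat -!cardE cardsC card_ord. Qed.

Lemma index_front_seq_lt v : index v front_seq < n.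
Proof. by rewrite -[X in _ < X]size_front_seq index_mem mem_front_seq. Qed.

Definition front_rank v : 'I_n := Ordinal (index_front_seq_lt v).

Lemma front_rank_inj : injective front_rank.
Proof.
move=> u v /(congr1 val) /= eq_uv.
by rewrite -(nth_index u (mem_front_seq u)) eq_uv nth_index ?mem_front_seq.
Qed.

Lemma front_rank_lt v : (front_rank v < #|Z|) = (v \in Z).
Proof.
rewrite /= /front_seq index_cat mem_enum cardE; case: ifP => vZ.
  by rewrite index_mem mem_enum vZ.
by rewrite ltnNge leq_addr.
Qed.

Lemma card_front_rank (p : pred nat) : #|[set v | p (front_rank v)]| = count p (iota 0 n).
Proof.
rewrite -sum1_card (eq_bigl (fun v => p (front_rank v))) => [|v]; last by rewrite inE.
rewrite -(reindex_inj front_rank_inj (P := fun i : 'I_n => p i) (F := fun => 1)) /=.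
by rewrite -(big_mkord p (fun => 1)) sum1_count /index_iota subn0.
Qed.

Lemma card_front_rankI (p : pred nat) :
  #|[set v | p (front_rank v)] :&: Z| = count p (iota 0 #|Z|).
Proof.
have -> : [set v | p (front_rank v)] :&: Z = [set v | (front_rank v < #|Z|) && p (front_rank v)].
  by apply/setP => v; rewrite !inE front_rank_lt andbC.
rewrite (card_front_rank (fun i => (i < #|Z|) && p i)).
have Z_le : #|Z| <= n by rewrite -[X in _ <= X]card_ord max_card.
have -> : iota 0 n = iota 0 #|Z| ++ iota #|Z| (n - #|Z|) by rewrite -iotaD subnKC.
rewrite count_cat [X in _ + X](@eq_in_count _ _ pred0) ?count_pred0 ?addn0 => [|i].
  by apply: eq_in_count => i; rewrite mem_iota => /andP[_ ->].
by rewrite mem_iota => /andP[/leq_gtF-> _].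
Qed.

End FrontOrder.

Section LabelFactor.
Variables (n m k : nat) (lab : 'I_n -> nat).
Hypothesis k_gt0 : 0 < k.
Hypothesis lab_lt : forall v, lab v < m.
Hypothesis card_lab_fiber : forall j, j < m -> #|[set v | lab v == j]| = k.

Definition label_factor : {set {set 'I_n}} := [set [set v | lab v == j] | j : 'I_m].

Lemma label_fiber_inj : injective (fun j : 'I_m => [set v | lab v == j]).
Proof.
move=> i j /= eq_ij; apply: ord_inj.
have /card_gt0P[v v_i] : 0 < #|[set v | lab v == i]| by rewrite card_lab_fiber.
have /eqP <- : lab v == i by rewrite inE in v_i.
by apply/eqP; move: v_i; rewrite eq_ij inE.
Qed.

Lemma label_factor_Kfactor : Kfactor k label_factor.
Proof.
have fiber_neq0 (j : 'I_m) : [set v | lab v == nat_of_ord j] != set0 :> {set 'I_n}.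
  by rewrite -card_gt0 card_lab_fiber.
apply/andP; split; last by apply/forall_inP => _ /imsetP[j _ ->]; rewrite card_lab_fiber.
apply/and3P; split.
- apply/eqP/setP => v; rewrite inE; apply/bigcupP.
  by exists [set u | lab u == Ordinal (lab_lt v)]; rewrite ?imset_f ?inE.
- apply/trivIsetP => _ _ /imsetP[i _ ->] /imsetP[j _ ->] neq_ij.
  rewrite -setI_eq0; apply/eqP/setP => v; rewrite !inE.
  by apply/negP => /andP[/eqP lab_i /eqP lab_j]; move: neq_ij; rewrite -lab_i -lab_j eqxx.
- by apply/imsetP => -[j _ /eqP]; rewrite eq_sym (negbTE (fiber_neq0 j)).
Qed.

Lemma big_label_factor (F : {set 'I_n} -> nat) :
  \sum_(B in label_factor) F B = \sum_(j < m) F [set v | lab v == j].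
Proof. by rewrite big_imset // => i j _ _; apply: label_fiber_inj. Qed.

End LabelFactor.

Section Extremes.
Variables (n k : nat) (X : {set 'I_n}).
Hypotheses (k_gt0 : 0 < k) (k_dvd_n : k %| n).

Lemma packed_factor : exists2 P, Kfactor k P & nb_blue X P = packed_pairs k #|~: X|.
Proof.
have [m n_eq] := dvdnP k_dvd_n.
pose lab (v : 'I_n) := front_rank (~: X) v %/ k.
have lab_lt v : lab v < m by rewrite ltn_divLR // -n_eq.
have fiber_card j : j < m -> #|[set v | lab v == j]| = k.
  move=> j_lt_m; rewrite (card_front_rank _ (fun i => i %/ k == j)) count_divn_eq //.
  rewrite n_eq -mulnBl.
  by apply/minn_idPl; rewrite leq_pmull // subn_gt0.
have P_factor := label_factor_Kfactor k_gt0 lab_lt fiber_card.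
exists (label_factor m lab) => //.
have y_le : #|~: X| <= m * k by rewrite -n_eq -[X in _ <= X]card_ord max_card.
rewrite (nb_blue_Kfactor P_factor) (big_label_factor k_gt0 fiber_card).
rewrite -(sum_bin2_chunks k_gt0 y_le); apply: eq_bigr => j _.
by rewrite (card_front_rankI _ (fun i => i %/ k == j)) count_divn_eq.
Qed.

Lemma balanced_factor :
  exists2 P, Kfactor k P & nb_blue X P = balanced_pairs (n %/ k) #|~: X|.
Proof.
have [m n_eq] := dvdnP k_dvd_n; have m_eq : n %/ k = m by rewrite n_eq mulnK.
pose lab (v : 'I_n) := front_rank (~: X) v %% m.
have lab_lt v : lab v < m.
  have : 0 < n := leq_ltn_trans (leq0n v) (ltn_ord v).
  by rewrite n_eq muln_gt0 => /andP[m_gt0 _]; rewrite ltn_pmod.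
have fiber_card j : j < m -> #|[set v | lab v == j]| = k.
  move=> j_lt_m; rewrite (card_front_rank _ (fun i => i %% m == j)) count_modn_eq //.
  by rewrite n_eq modnMr mulKn ?addn0 //; case: (m) j_lt_m.
have P_factor := label_factor_Kfactor k_gt0 lab_lt fiber_card.
exists (label_factor m lab) => //.
have card_P : #|label_factor m lab| = m by rewrite (card_Kfactor P_factor) // m_eq.
rewrite m_eq -[X in balanced_pairs X _]card_P.
apply: (nb_blue_balanced P_factor) => _ /imsetP[j _ ->].
rewrite (card_front_rankI _ (fun i => i %% m == j)) count_modn_eq // card_P.
by case: (_ < _); rewrite ?addn0 ?addn1 eqxx ?orbT.
Qed.

Lemma max_nb_blue : max_over_factors k (nb_blue X) (packed_pairs k #|~: X|).
Proof.
split; first by have [P] := packed_factor; exists P.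
by move=> P P_factor; apply: nb_blue_le_packed.
Qed.

Lemma max_nb_red : exists v, max_over_factors k (nb_red X) v /\
  v + balanced_pairs (n %/ k) #|~: X| = n %/ k * 'C(k, 2).
Proof.
have [P P_factor blue_P] := balanced_factor.
have total P' : Kfactor k P' -> nb_red X P' + nb_blue X P' = n %/ k * 'C(k, 2).
  by move=> P'_factor; rewrite (nb_red_add_blue P'_factor) (card_Kfactor P'_factor).
exists (nb_red X P); split; last by rewrite -blue_P total.
split=> [|P' P'_factor]; first by exists P.
have := total _ P'_factor; have := total _ P_factor.
have := balanced_le_nb_blue P'_factor X; rewrite (card_Kfactor P'_factor) //.
by rewrite blue_P; lia.
Qed.

End Extremes.

Local Open Scope ring_scope.

Lemma natr_bin2 (R : numFieldType) x : 'C(x, 2)%:R = x%:R * (x%:R - 1) / 2 :> R.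
Proof.
have -> : 'C(x, 2)%:R = ('C(x, 2) * 2 + x)%:R / 2 - x%:R / 2 :> R.
  by rewrite natrD natrM; field.
by rewrite bin2_mul2 natrM; field.
Qed.

Lemma packed_pairs_near_linear (R : realFieldType) k y : (0 < k)%N ->
  `|(packed_pairs k y)%:R - (k%:R - 1) / 2 * y%:R| <= k%:R ^+ 2 / 8 :> R.
Proof.
move=> k_gt0; have r_lt_k : (y %% k < k)%N by rewrite ltn_pmod.
rewrite /packed_pairs {3}(divn_eq y k) !natrD !natrM !natr_bin2.
set q := (y %/ k)%N; set r := (y %% k)%N.
have r_ge0 : 0 <= r%:R :> R by rewrite ler0n.
have r_le_k : r%:R <= k%:R :> R by rewrite ler_nat ltnW.
have -> : q%:R * (k%:R * (k%:R - 1) / 2) + r%:R * (r%:R - 1) / 2 -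
    (k%:R - 1) / 2 * (q%:R * k%:R + r%:R) = - (r%:R * (k%:R - r%:R) / 2) :> R by field.
have k_sub_r : 0 <= k%:R - r%:R :> R by rewrite subr_ge0.
have := mulr_ge0 r_ge0 k_sub_r.
have := sqr_ge0 (k%:R - 2 * r%:R : R).
rewrite normrN ler_norml => sq_ge0 prod_ge0; apply/andP; split; nra.
Qed.

Lemma floor_natr_div (R : archiFieldType) x m : Num.floor (x%:R / m%:R : R) = (x %/ m)%N%:Z.
Proof.
have [-> | m_gt0] := posnP m; first by rewrite invr0 mulr0 divn0 floor0.
have t_lt : (x %% m < m)%N by rewrite ltn_pmod.
have m_neq0 : m%:R != 0 :> R by rewrite pnatr_eq0 -lt0n.
have -> : x%:R / m%:R = (x %/ m)%N%:R + (x %% m)%N%:R / m%:R :> R.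
  by rewrite {1}(divn_eq x m) natrD natrM; field.
have t0 : 0 <= (x %% m)%N%:R / m%:R :> R by rewrite divr_ge0.
have t1 : (x %% m)%N%:R / m%:R < 1 :> R by rewrite ltr_pdivrMr ?mul1r ?ltr_nat ?ltr0n.
apply: floor_def; rewrite intrD -!pmulrn; apply/andP; split; lra.
Qed.

Lemma red_count_closed_form (R : archiFieldType) (n k x y v : nat) :
  (0 < k)%N -> (k %| n)%N -> (x + y)%N = n ->
  (v + balanced_pairs (n %/ k) y)%N = (n %/ k * 'C(k, 2))%N ->
  let rho := x%:R / n%:R : R in
  let f := Num.floor (k%:R * rho) in
  v%:R = ((k%:R - 1) / 2 - (k%:R - f%:~R - 1) / 2 * (f%:~R / k%:R + 1 - 2 * rho)) * n%:R.
Proof.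
move=> k_gt0 /dvdnP[m ->] xy_n v_eq rho f; rewrite {}/f {}/rho.
rewrite mulnK // /balanced_pairs in v_eq.
have [m0 | m_gt0] := posnP m.
  by rewrite m0 mul0n mulr0 (_ : v = 0%N) //; move: v_eq; rewrite m0; lia.
have k_neq0 : k%:R != 0 :> R by rewrite pnatr_eq0 -lt0n.
have m_neq0 : m%:R != 0 :> R by rewrite pnatr_eq0 -lt0n.
rewrite natrM (_ : k%:R * _ = x%:R / m%:R) ?floor_natr_div; last by field; rewrite m_neq0.
have x_eq : x%:R = (x %/ m)%:R * m%:R + (x %% m)%:R :> R.
  by rewrite {1}(divn_eq x m) natrD natrM.
rewrite -pmulrn x_eq.
have {}v_eq : v%:R = m%:R * 'C(k, 2)%:R -
    (m%:R * 'C(y %/ m, 2)%:R + (y %% m)%:R * (y %/ m)%:R) :> R.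
  by apply/eqP; rewrite eq_sym subr_eq -!natrM -!natrD v_eq.
rewrite {}v_eq !natr_bin2.
case: (divmod_sum_mul m_gt0 xy_n) => [[-> [-> k_eq]] | [st_eq k_eq]].
  have -> : (x %/ m)%:R = k%:R - (y %/ m)%:R :> R by rewrite -k_eq natrD addrK.
  by field; rewrite m_neq0 k_neq0.
have -> : (x %/ m)%:R = k%:R - (y %/ m)%:R - 1 :> R.
  by rewrite -k_eq -addn1 !natrD; ring.
have -> : (y %% m)%:R = m%:R - (x %% m)%:R :> R.
  by apply/eqP; rewrite eq_sym subr_eq -natrD addnC st_eq.
by field; rewrite m_neq0 k_neq0.
Qed.

Lemma one_sub_ratio_mul (R : numFieldType) x y n : (x + y)%N = n ->
  (1 - x%:R / n%:R) * n%:R = y%:R :> R.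
Proof.
move=> <-; have [xy0 | xy_gt0] := posnP (x + y).
  by rewrite xy0 mulr0 (_ : y = 0%N) //; lia.
by rewrite mulrBl mul1r mulfVK ?pnatr_eq0 -?lt0n // natrD addrAC subrr add0r.
Qed.

Theorem lemma3p3 (k : nat) (hk : (2 <= k)%N) :
  exists C : rat, forall (n : nat) (hkn : (k %| n)%N) (X : {set 'I_n}),
    let rho : rat := #|X|%:R / n%:R in
    let q := (#|~: X| %/ k)%N in
    let r := (#|~: X| %% k)%N in
    let f : int := Num.floor (k%:R * rho) in
    @max_over_factors n k (nb_blue X) (q * 'C(k, 2) + 'C(r, 2))%N /\
    `|((q * 'C(k, 2) + 'C(r, 2))%N)%:R - (k%:R - 1) / 2 * (1 - rho) * n%:R| <= C /\
    (exists v : nat, @max_over_factors n k (nb_red X) v /\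
       v%:R = ((k%:R - 1) / 2
                - (k%:R - f%:~R - 1) / 2 * (f%:~R / k%:R + 1 - 2 * rho)) * n%:R).
Proof.
have k_gt0 : (0 < k)%N by apply: ltnW.
exists (k%:R ^+ 2 / 8) => n k_dvd_n X rho q r f.
have card_XY : (#|X| + #|~: X|)%N = n by rewrite cardsC card_ord.
split; first exact: max_nb_blue.
split; first by rewrite -mulrA (one_sub_ratio_mul _ card_XY) packed_pairs_near_linear.
have [v [v_max v_eq]] := max_nb_red X k_gt0 k_dvd_n.
by exists v; split; last exact: red_count_closed_form card_XY v_eq.
Qed.
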